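(* Let $B:A\to\mathcal U$ be a type family, let $a:A$ be initial in $A$, and let $b:B(a)$ be dependent initial in $B$. Then $(a,b)$ is initial in $\Sigma(x:A,B(x))$.
   Context: Setting: Riehl–Shulman simplicial homotopy type theory (Martin-Löf type theory with $\Sigma$, $\Pi$, identity types, universe $\mathcal U$, function and extension extensionality, directed interval cube $2$, shapes, extension types $\langle(t:\psi)\to A(t)\mid^{\varphi}_{a}\rangle$ of functions on $\psi$ judgmentally restricting to $a$ on $\varphi$). $\Delta^1=\{t:2\}$, $\partial\Delta^1=\{t\equiv0\vee t\equiv1\}$, $\hom_T(x,y):=\langle\Delta^1\to T\mid^{\partial\Delta^1}_{[x,y]}\rangle$. $x$ is initial in $T$ if $\hom_T(x,t)$ is contractible for all $t:T$. For $f:\hom_A(x,y)$, $x':B(x)$, $y':B(y)$: $\mathrm{dhom}^f_B(x',y'):=\langle(t:\Delta^1)\to B(f(t))\mid^{\partial\Delta^1}_{[x',y']}\rangle$; $b:B(a)$ is dependent initial in $B$ if $\mathrm{dhom}^f_B(b,b')$ is contractible for all $a':A$, $f:\hom_A(a,a')$, $b':B(a')$. *)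

Definition isContr (X : Type) : Type := { c : X & forall x : X, c = x }.

(* hom_T(x,y) := < Δ¹ -> T | ∂Δ¹ -> [x,y] > *)
Definition hom (I : Type) (i0 i1 : I) (T : Type) (x y : T) : Type :=
  { f : I -> T & ((f i0 = x) * (f i1 = y))%type }.

Definition is_initial (I : Type) (i0 i1 : I) (T : Type) (x : T) : Type :=
  forall t : T, isContr (hom I i0 i1 T x t).

(* dhom^f_B(x',y') := < (t:Δ¹) -> B(f t) | ∂Δ¹ -> [x',y'] >, the boundary
   condition being stated over the boundary identifications of f. *)
Definition dhom (I : Type) (i0 i1 : I) (A : Type) (B : A -> Type) (x y : A)
    (f : hom I i0 i1 A x y) (x' : B x) (y' : B y) : Type :=
  { g : forall t : I, B (projT1 f t) &
    ((eq_rect (projT1 f i0) B (g i0) x (fst (projT2 f)) = x') *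
     (eq_rect (projT1 f i1) B (g i1) y (snd (projT2 f)) = y'))%type }.

Definition is_dep_initial (I : Type) (i0 i1 : I) (A : Type) (B : A -> Type)
    (a : A) (b : B a) : Type :=
  forall (a' : A) (f : hom I i0 i1 A a a') (b' : B a'),
    isContr (dhom I i0 i1 A B a a' f b b').

(* A hom in the total space is a pair of a hom [f] in [A] and a dependent hom
   over [f], once its boundary paths are split into base and fibre components.
   So hom((a,b),(x,y)) is a retract of the type of such pairs, which is
   contractible as a sigma type of contractible types over a contractible base. *)

From Stdlib Require Import FunctionalExtensionality.

Lemma isContr_sigT {X : Type} {P : X -> Type} :
  isContr X -> (forall x, isContr (P x)) -> isContr {x : X & P x}.
Proof.
  intros [c hc] hP.
  exists (existT P c (projT1 (hP c))).
  intros [x y]. destruct (hc x).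
  destruct (hP c) as [c' hc']. simpl. rewrite (hc' y). reflexivity.
Qed.

Lemma isContr_retract {X Y : Type} (r : Y -> X) :
  isContr Y -> (forall x, {y : Y & r y = x}) -> isContr X.
Proof.
  intros [c hc] r_sect. exists (r c). intros x.
  destruct (r_sect x) as [y hy]. rewrite <- hy, (hc y). reflexivity.
Qed.

Definition path_sigT {A : Type} (B : A -> Type) (u v : sigT B)
    (p : projT1 u = projT1 v) (q : eq_rect _ B (projT2 u) _ p = projT2 v) :
  u = v.
Proof.
  destruct u as [x y], v as [x' y']; simpl in *.
  destruct p, q. reflexivity.
Defined.

Lemma path_sigT_surj {A : Type} (B : A -> Type) (u v : sigT B) (e : u = v) :
  {p : projT1 u = projT1 v &
   {q : eq_rect _ B (projT2 u) _ p = projT2 v & path_sigT B u v p q = e}}.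
Proof.
  destruct e, u as [x y]. exists eq_refl, eq_refl. reflexivity.
Defined.

Section HomSigT.

Variables (I : Type) (i0 i1 : I) (A : Type) (B : A -> Type).
Variables (a x : A) (b : B a) (y : B x).

Definition hom_sigT_of_dhom
    (w : {f : hom I i0 i1 A a x & dhom I i0 i1 A B a x f b y}) :
  hom I i0 i1 (sigT B) (existT B a b) (existT B x y) :=
  let f := projT1 w in
  let g := projT2 w in
  existT _ (fun t => existT B (projT1 f t) (projT1 g t))
    (path_sigT B (existT B _ (projT1 g i0)) (existT B a b)
       (fst (projT2 f)) (fst (projT2 g)),
     path_sigT B (existT B _ (projT1 g i1)) (existT B x y)
       (snd (projT2 f)) (snd (projT2 g))).

Lemma hom_sigT_of_dhom_surj
    (F : hom I i0 i1 (sigT B) (existT B a b) (existT B x y)) :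
  {w : {f : hom I i0 i1 A a x & dhom I i0 i1 A B a x f b y} &
   hom_sigT_of_dhom w = F}.
Proof.
  destruct F as [F [e0 e1]].
  (* [sigT] has no judgmental eta, so this needs function extensionality. *)
  assert (F_eta : F = fun t => existT B (projT1 (F t)) (projT2 (F t))).
  { apply functional_extensionality. intros t. destruct (F t). reflexivity. }
  revert e0 e1. rewrite F_eta. intros e0 e1.
  destruct (path_sigT_surj B _ _ e0) as [p0 [q0 <-]].
  destruct (path_sigT_surj B _ _ e1) as [p1 [q1 <-]].
  exists (existT (fun f => dhom I i0 i1 A B a x f b y)
            (existT _ (fun t => projT1 (F t)) (p0, p1))
            (existT _ (fun t => projT2 (F t)) (q0, q1))).
  reflexivity.
Qed.

End HomSigT.

Theorem lemma5p1p3 (I : Type) (i0 i1 : I) (A : Type) (B : A -> Type)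
    (a : A) (b : B a) :
  is_initial I i0 i1 A a ->
  is_dep_initial I i0 i1 A B a b ->
  is_initial I i0 i1 { x : A & B x } (existT B a b).
Proof.
  intros a_initial b_dep_initial [x y].
  apply (isContr_retract (hom_sigT_of_dhom I i0 i1 A B a x b y)).
  - apply isContr_sigT.
    + apply a_initial.
    + intros f. apply b_dep_initial.
  - apply hom_sigT_of_dhom_surj.
Qed.
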